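(* Let $\alpha,\beta\in(0,\infty)$ and let $Y$ be a non-negative random variable with finite expectation $\mu=\mathbb{E}Y$ and (finite) variance $\sigma^2=\mathrm{Var}\,Y$. Then for all $c\in(0,\infty)$, $$\mathbb{E}\frac{1}{(\alpha+Y)^\beta}\leq\frac{1}{(\alpha+c)^\beta}+\frac{\beta(c-\mu)}{(\alpha+c)^{\beta+1}}+\frac{\sigma^2+(c-\mu)^2}{c^2}\Big(\frac{1}{\alpha^\beta}-\frac{\alpha+c(\beta+1)}{(\alpha+c)^{\beta+1}}\Big).$$ *)

From HB Require Import structures.
From mathcomp Require Import all_boot all_order all_algebra.
From mathcomp Require Import all_classical all_reals all_analysis.
Set Implicit Arguments. Unset Strict Implicit. Unset Printing Implicit Defensive.

From HB Require Import structures.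
From mathcomp Require Import all_boot all_order all_algebra.
From mathcomp Require Import all_classical all_reals all_analysis.
From mathcomp Require Import ring lra measurable_realfun.
Import Order.TTheory GRing.Theory Num.Theory.
Local Open Scope ring_scope.

(* Let f y := (alpha + y)^-beta and let q be the quadratic tangent to f at
   y = c that also agrees with f at y = 0.  Then q >= f on [0, +oo), and
   E q(Y) = f c + f' c (mu - c) + K (sigma2 + (mu - c)^2), K the leading
   coefficient of q, is the bound.
   For q >= f, put h := q - f in the variable x = alpha + y: its second
   derivative 2K - beta (beta + 1) x^(-beta-2) is nondecreasing, so h' is
   convex, and h (alpha) = h (alpha + c) = h' (alpha + c) = 0; this forces
   h >= 0 on [alpha, +oo). *)

Section convex_derivative.
Context {R : realType} {l : R}.

Lemma halfline_MVT {f df : R -> R} {u v : R} :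
  (forall x, l < x -> is_derive x 1 f (df x)) -> l < u -> u < v ->
  exists2 t, u < t < v & f v - f u = df t * (v - u).
Proof.
move=> fD lu uv.
have fD_uv x : x \in `]u, v[ -> is_derive x 1 f (df x).
  by rewrite in_itv /= => /andP[ux _]; apply: fD; apply: lt_trans ux.
have [|t] := MVT uv fD_uv; last by rewrite in_itv; exists t.
apply: derivable_within_continuous => x; rewrite in_itv /= => /andP[ux _].
by have /fD[] : l < x by apply: lt_le_trans ux.
Qed.

Context {h h1 h2 : R -> R}.
Hypothesis hD : forall x, l < x -> is_derive x 1 h (h1 x).
Hypothesis h1D : forall x, l < x -> is_derive x 1 h1 (h2 x).
Hypothesis h2_ndecr : forall x y, l < x -> x <= y -> h2 x <= h2 y.

Lemma deriv_chord_le {u v w : R} : l < u -> u < v -> v < w ->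
  (h1 v - h1 u) * (w - v) <= (h1 w - h1 v) * (v - u).
Proof.
move=> lu uv vw.
have [s /andP[us sv] ->] := halfline_MVT h1D lu uv.
have [t /andP[vt tw] ->] := halfline_MVT h1D (lt_trans lu uv) vw.
rewrite -!mulrA [(v - u) * _]mulrC ler_wpM2r ?h2_ndecr //.
- by rewrite mulr_ge0 // subr_ge0 ltW.
- exact: lt_trans us.
- by rewrite ltW // (lt_trans sv).
Qed.

(* By Rolle [h1] vanishes at some [xi] in (a, b); being convex with zeros [xi]
   and [b], it is <= 0 on (xi, b) and >= 0 elsewhere, so [h] rises from
   [h a = 0], falls back to [h b = 0] and rises again. *)
Lemma ge0_deriv_convex {a b : R} : l < a -> a < b -> h a = 0 -> h b = 0 -> h1 b = 0 ->
  forall x, a <= x -> 0 <= h x.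
Proof.
move=> la ab ha0 hb0 h1b0.
have [xi /andP[a_xi xi_b] h1xi0] : exists2 xi, a < xi < b & h1 xi = 0.
  have [xi xi_ab] := halfline_MVT hD la ab.
  rewrite hb0 ha0 subrr => /esym /eqP.
  by rewrite mulf_eq0 subr_eq0 (gt_eqF ab) orbF => /eqP; exists xi.
have l_xi : l < xi by apply: lt_trans a_xi.
have h1_ge0_left t : l < t -> t < xi -> 0 <= h1 t.
  move=> l_t t_xi; have := deriv_chord_le l_t t_xi xi_b.
  rewrite h1xi0 h1b0; nra.
have h1_le0_mid t : xi < t -> t < b -> h1 t <= 0.
  move=> xi_t tb; have := deriv_chord_le l_xi xi_t tb.
  rewrite h1xi0 h1b0; nra.
have h1_ge0_right t : b < t -> 0 <= h1 t.
  move=> bt; have := deriv_chord_le l_xi xi_b bt.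
  rewrite h1xi0 h1b0; nra.
move=> x; rewrite le_eqVlt => /predU1P[<-|ax]; first by rewrite ha0.
have [x_le_xi|xi_x] := leP x xi.
  have [t /andP[a_t tx] hx] := halfline_MVT hD la ax.
  have -> : h x = h1 t * (x - a) by rewrite -hx ha0 subr0.
  rewrite mulr_ge0 ?subr_ge0 ?(ltW ax) // h1_ge0_left //.
    exact: lt_trans a_t.
  exact: lt_le_trans x_le_xi.
have [xb|bx] := ltP x b.
  have [t /andP[xt tb] hx] := halfline_MVT hD (lt_trans la ax) xb.
  have -> : h x = - h1 t * (b - x) by rewrite mulNr -hx hb0 sub0r opprK.
  by rewrite mulr_ge0 ?subr_ge0 ?(ltW xb) // oppr_ge0 h1_le0_mid // (lt_trans xi_x).
move: bx; rewrite le_eqVlt => /predU1P[<-|bx]; first by rewrite hb0.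
have [t /andP[bt tx] hx] := halfline_MVT hD (lt_trans la ab) bx.
have -> : h x = h1 t * (x - b) by rewrite -hx hb0 subr0.
by rewrite mulr_ge0 ?subr_ge0 ?(ltW bx) // h1_ge0_right.
Qed.

End convex_derivative.

Section quad_sub_powR.
Variable R : realType.

Definition quad_sub_powR (A B K b s r : R) (y : R) : R :=
  A + B * (y - b) + K * (y - b) ^+ 2 - s * y `^ r.

Lemma is_derive_quad_sub_powR (A B K b s r x : R) : 0 < x ->
  is_derive x 1 (quad_sub_powR A B K b s r)
    (quad_sub_powR B (2 * K) 0 b (s * r) (r - 1) x).
Proof.
move=> x0; rewrite /quad_sub_powR.
have idB := is_deriveB (is_derive_id x 1) (is_derive_cst b x 1).
apply: (is_derive_eq (is_deriveB (is_deriveD (is_deriveD (is_derive_cst A x 1)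
  (is_deriveM (is_derive_cst B x 1) idB))
  (is_deriveM (is_derive_cst K x 1) (is_deriveX 2 idB)))
  (is_deriveM (is_derive_cst s x 1) (is_derive1_powR r x0)))).
have -> : (id - cst b) x = x - b by [].
rewrite /= -![_ *: _]/(_ * _) expr1; ring.
Qed.

Lemma inv_powR_le_quadratic (al be c y : R) :
  0 < al -> 0 < be -> 0 < c -> 0 <= y ->
  ((al + y) `^ be)^-1 <= ((al + c) `^ be)^-1 - be / (al + c) `^ (be + 1) * (y - c)
    + ((al `^ be)^-1 - (al + c * (be + 1)) / (al + c) `^ (be + 1)) / c ^+ 2
      * (y - c) ^+ 2.
Proof.
move=> al0 be0 c0 y0.
set b := al + c; set K := (_ / c ^+ 2).
have b0 : 0 < b by rewrite addr_gt0.
have powN (z p : R) : z `^ (- p) = (z `^ p)^-1 by rewrite powRN.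
have bS : b `^ (be + 1) = b `^ be * b.
  by rewrite powRD ?powRr1 ?ltW //; apply/implyP => _; rewrite gt_eqF.
pose B := - (be / b `^ (be + 1)).
pose h := quad_sub_powR (b `^ (- be)) B K b 1 (- be).
pose h1 := quad_sub_powR B (2 * K) 0 b (1 * - be) (- be - 1).
pose h2 := quad_sub_powR (2 * K) (2 * 0) 0 b (1 * - be * (- be - 1)) (- be - 1 - 1).
have hD (x : R) : 0 < x -> is_derive x 1 h (h1 x) by exact: is_derive_quad_sub_powR.
have h1D (x : R) : 0 < x -> is_derive x 1 h1 (h2 x) by exact: is_derive_quad_sub_powR.
have h2_ndecr (x z : R) : 0 < x -> x <= z -> h2 x <= h2 z.
  move=> x0 xz; rewrite /h2 /quad_sub_powR !(mulr0, mul0r, addr0) lerD2l lerN2.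
  have -> : - be - 1 - 1 = - (be + 2) by ring.
  apply: ler_wpM2l; first nra.
  have z0 : 0 < z by apply: lt_le_trans xz.
  rewrite !powN lef_pV2 ?posrE ?powR_gt0 // ge0_ler_powR ?nnegrE //; lra.
have h_al : h al = 0.
  rewrite /h /quad_sub_powR /B /K.
  have -> : al - b = - c by rewrite /b; ring.
  rewrite !powN bS /b; field.
  by rewrite !gt_eqF ?powR_gt0.
have h_b : h b = 0 by rewrite /h /quad_sub_powR subrr; ring.
have h1_b : h1 b = 0 by rewrite /h1 /quad_sub_powR /B -opprD powN subrr; ring.
have : 0 <= h (al + y).
  apply: (ge0_deriv_convex hD h1D h2_ndecr al0 _ h_al h_b h1_b).
  - by rewrite ltrDl.
  - by rewrite lerDl.
have shift : al + y - b = y - c by rewrite /b; ring.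
rewrite /h /quad_sub_powR /B shift mul1r !powN; lra.
Qed.

End quad_sub_powR.

Section quadratic_expectation.
Local Open Scope ereal_scope.
Context {d : measure_display} {T : measurableType d} {R : realType}.
Context {P : probability T R} {X : T -> R}.
Hypothesis X2 : X \in Lfun P 2%:E.

Let P_fin : P setT \is a fin_num.
Proof. by rewrite probability_setT. Qed.

Let Xc2 (c : R) : (X \- cst c)%R \in Lfun P 2%:E.
Proof.
apply: rpredB => //; first by rewrite lee_fin ler1n.
by move=> ?; exact: Lfun_cst.
Qed.

Let sqr_Lfun1 (c : R) : ((X \- cst c) ^+ 2)%R \in Lfun P 1.
Proof. exact: Lfun2_mul_Lfun1. Qed.

Lemma expectation_sqr_sub_cst (c : R) :
  'E_P[((X \- cst c) ^+ 2)%R] = (fine 'V_P[X] + (fine 'E_P[X] - c) ^+ 2)%:E.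
Proof.
have X1 := Lfun_subset12 P_fin X2.
have := varianceE (Xc2 c).
rewrite varianceB_cst_r // expectationB ?Lfun_cst // expectation_cst => VE.
rewrite -(fineK (variance_fin_num X2)) -(fineK (expectation_fin_num X1)) in VE.
rewrite -(fineK (expectation_fin_num (sqr_Lfun1 c))) in VE *.
by move: VE; rewrite -EFinB => -[->]; rewrite expr2 subrK.
Qed.

Variables (A B K c : R).

Let quadraticE : (fun x => A + B * (X x - c) + K * (X x - c) ^+ 2)%R =
  (cst A \+ B \o* (X \- cst c) \+ K \o* (X \- cst c) ^+ 2)%R.
Proof.
by apply/funext => x; rewrite exprfctE /= [(_ * B)%R]mulrC [(_ * K)%R]mulrC.
Qed.

Lemma Lfun1_quadratic :
  (fun x => A + B * (X x - c) + K * (X x - c) ^+ 2)%R \in Lfun P 1.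
Proof.
rewrite quadraticE; apply: rpredD; last exact/Lfun_scale/sqr_Lfun1.
apply: rpredD; first exact: Lfun_cst.
by apply: Lfun_scale => //; apply: Lfun_subset12.
Qed.

Lemma expectation_quadratic :
  'E_P[fun x => (A + B * (X x - c) + K * (X x - c) ^+ 2)%R] =
  (A + B * (fine 'E_P[X] - c) + K * (fine 'V_P[X] + (fine 'E_P[X] - c) ^+ 2))%:E.
Proof.
have X1 := Lfun_subset12 P_fin X2.
have Xc1 := Lfun_subset12 P_fin (Xc2 c).
rewrite quadraticE expectationD ?Lfun_scale //; last first.
  by apply: rpredD; [exact: Lfun_cst | exact: Lfun_scale].
rewrite expectationD ?Lfun_cst ?Lfun_scale // !expectationZl //.
rewrite expectation_sqr_sub_cst expectationB ?Lfun_cst // !expectation_cst.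
rewrite -[in 'E_P[X] - _](fineK (expectation_fin_num X1)).
by rewrite -EFinB -!EFinM -!EFinD.
Qed.

End quadratic_expectation.

Theorem mainTheorem8 (d : measure_display) (T : measurableType d) (R : realType)
  (P : probability T R) (Y : {RV P >-> R}) (alpha beta c : R)
  (ha : 0 < alpha) (hb : 0 < beta) (hc : 0 < c)
  (hY0 : forall x, 0 <= Y x)
  (hY2 : (Y : T -> R) \in Lfun P 2%:E) :
  let mu := fine ('E_P[Y])%E in
  let sigma2 := fine ('V_P[Y])%E in
  ('E_P[fun x => ((alpha + Y x) `^ beta)^-1%R] <=
    (((alpha + c) `^ beta)^-1
     + beta * (c - mu) / (alpha + c) `^ (beta + 1)
     + (sigma2 + (c - mu) ^+ 2) / c ^+ 2
       * ((alpha `^ beta)^-1 - (alpha + c * (beta + 1)) / (alpha + c) `^ (beta + 1)))%:E)%E.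
Proof.
cbv zeta.
pose A := ((alpha + c) `^ beta)^-1.
pose B := - (beta / (alpha + c) `^ (beta + 1)).
pose K := ((alpha `^ beta)^-1
  - (alpha + c * (beta + 1)) / (alpha + c) `^ (beta + 1)) / c ^+ 2.
pose Q x := A + B * (Y x - c) + K * (Y x - c) ^+ 2.
have bound x : ((alpha + Y x) `^ beta)^-1 <= Q x.
  by rewrite /Q /B mulNr; exact: inv_powR_le_quadratic.
have f_ge0 x : 0 <= ((alpha + Y x) `^ beta)^-1 by rewrite invr_ge0 powR_ge0.
have f_mfun : measurable_fun setT (fun x => ((alpha + Y x) `^ beta)^-1).
  under eq_fun do rewrite -powRN.
  by apply: measurableT_comp (measurable_powR _) _; apply: measurable_funD.
have Q_mfun : measurable_fun setT Q.
  exact: set_mem (sub_Lfun_mfun (Lfun1_quadratic hY2 A B K c)).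
apply: le_trans (expectation_le f_mfun Q_mfun f_ge0
  (fun x => le_trans (f_ge0 x) (bound x)) (aeW _ bound)) _.
rewrite expectation_quadratic // lee_fin le_eqVlt; apply/orP; left.
by apply/eqP; rewrite /A /B /K; ring.
Qed.
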